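(* Let $\theta_1<\theta_2$, $f\in C^2([\theta_1,\theta_2])$, $\gamma>1$, and let $I\subseteq[\theta_1,\theta_2]$ be a closed interval. Suppose that, for positive constants $A$ and $\alpha$ with $\alpha<2\gamma-2$, one of the following holds: $f(s)f''(s)\ge A(s-\theta_1)^\alpha$ for all $s\in I$; or $f(s)f''(s)\ge A(\theta_2-s)^\alpha$ for all $s\in I$. Then there is a constant $C>0$ depending only on $A,\alpha,\theta_1,\theta_2,\gamma$ such that $\int_I|f(s)|^{-1/\gamma}\,ds\le C$. *)

From HB Require Import structures.
From mathcomp Require Import all_boot all_order all_algebra.
From mathcomp Require Import all_classical all_reals all_analysis.
Set Implicit Arguments. Unset Strict Implicit. Unset Printing Implicit Defensive.
Import Order.TTheory GRing.Theory Num.Theory.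
Import numFieldNormedType.Exports.
Local Open Scope ring_scope.

(* A C^2 function on a
   compact interval [t1,t2] extends to a C^2 function on R, and the statement
   only uses the values of f, f'' on [t1,t2], so quantifying over such f is
   equivalent to quantifying over f in C^2([t1,t2]). *)
Definition C2 (R : realType) (f : R -> R) : Prop :=
  (forall x : R, derivable f x 1) /\
  (forall x : R, derivable (derive1 f) x 1) /\
  continuous (derive1 (derive1 f)).

From HB Require Import structures.
From mathcomp Require Import all_boot all_order all_algebra.
From mathcomp Require Import all_classical all_reals all_analysis.
From mathcomp Require Import ring lra measurable_realfun.
Set Implicit Arguments. Unset Strict Implicit. Unset Printing Implicit Defensive.
Import Order.TTheory GRing.Theory Num.Theory.
Import numFieldNormedType.Exports.
Local Open Scope classical_set_scope.
Local Open Scope ring_scope.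

(* Put h := f^2, so that h'' = 2 (f'^2 + f f'') >= 2 f f''.  On [a, b] either hypothesis
   gives f f'' >= A d^alpha, where d is the distance to the boundary of [a, b], so h is
   convex there.  Let s0 minimise h on [a, b] and let s lie at distance 3 L from s0.  On
   the middle third of the segment between s0 and s we have d >= L, hence
   h'' >= 2 A L^alpha; as h' cannot be negative just past the minimum, integrating twice
   gives f(s)^2 >= 2 A L^(alpha + 2).  So |f(s)|^(-1/gamma) <= k |s - s0|^(-beta) with
   beta = (alpha + 2) / (2 gamma), and beta < 1 precisely because alpha < 2 gamma - 2:
   the bound is integrable, with integral at most 2 k (b - a)^(1 - beta) / (1 - beta). *)

Section mean_value.
Variables (R : realType) (g dg : R -> R).
Hypothesis g_dg : forall x : R, is_derive x 1 g (dg x).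

Lemma MVT_is_derive u v : u < v ->
  exists2 c, u < c < v & g v - g u = dg c * (v - u).
Proof.
move=> uv; have cg : {within `[u, v], continuous g}.
  by apply: derivable_within_continuous => x _; exact: ex_derive.
have [c] := MVT uv (fun x _ => g_dg x) cg.
by rewrite in_itv /= => cuv ->; exists c.
Qed.

Lemma ler_sub_of_derive_ge m u v : u <= v ->
  (forall x, u < x < v -> m <= dg x) -> m * (v - u) <= g v - g u.
Proof.
rewrite le_eqVlt => /predU1P[-> _|uv dgm]; first by rewrite !subrr mulr0.
have [c cuv ->] := MVT_is_derive uv.
by rewrite ler_pM2r ?subr_gt0 // dgm.
Qed.

End mean_value.

Section growth_away_from_min.
Variables (R : realType) (g dg ddg : R -> R).
Hypothesis g_dg : forall x : R, is_derive x 1 g (dg x).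
Hypothesis dg_ddg : forall x : R, is_derive x 1 dg (ddg x).

Lemma growth_right_of_min p L M : 0 < L ->
  (forall x, p <= x <= p + 3 * L -> 0 <= ddg x) ->
  (forall x, p + L <= x <= p + 2 * L -> M <= ddg x) ->
  g p <= g (p + L) -> 0 <= g (p + 2 * L) ->
  M * L ^+ 2 <= g (p + 3 * L).
Proof.
move=> L0 ddg_ge0 ddg_geM gp g2.
have dg_ndecr x y : p <= x -> x <= y -> y <= p + 3 * L -> dg x <= dg y.
  move=> px xy yq; rewrite -subr_ge0 -[X in X <= _](mul0r (y - x)).
  apply: (ler_sub_of_derive_ge dg_ddg xy) => z /andP[xz zy].
  by apply: ddg_ge0; apply/andP; split; lra.
have dg_pL_ge0 : 0 <= dg (p + L).
  have pL : p < p + L by lra.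
  have [c /andP[pc cpL] gE] := MVT_is_derive g_dg pL.
  have dgc : 0 <= dg c.
    by move: gp; rewrite -subr_ge0 gE pmulr_lge0 // subr_gt0.
  by apply: le_trans dgc (dg_ndecr _ _ _ _ _); lra.
have dg_incr : M * L <= dg (p + 2 * L) - dg (p + L).
  have := ler_sub_of_derive_ge dg_ddg (m := M) (u := p + L) (v := p + 2 * L).
  have -> : p + 2 * L - (p + L) = L by ring.
  apply; first lra.
  by move=> x /andP[? ?]; apply: ddg_geM; apply/andP; split; lra.
have g_incr : dg (p + 2 * L) * L <= g (p + 3 * L) - g (p + 2 * L).
  have := ler_sub_of_derive_ge g_dg (m := dg (p + 2 * L)) (u := p + 2 * L) (v := p + 3 * L).
  have -> : p + 3 * L - (p + 2 * L) = L by ring.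
  apply; first lra.
  by move=> x /andP[? ?]; apply: dg_ndecr; lra.
nra.
Qed.

End growth_away_from_min.

Lemma is_derive_comp_opp (R : realType) (g dg : R -> R) (x : R) :
  is_derive (- x) 1 g (dg (- x)) -> is_derive x 1 (g \o -%R) (- dg (- x)).
Proof.
by move=> gd; apply: is_derive_eq (is_derive1_comp gd (is_deriveNid x 1)) _; rewrite mulrN1.
Qed.

Lemma growth_left_of_min (R : realType) (g dg ddg : R -> R) q L M :
  (forall x : R, is_derive x 1 g (dg x)) ->
  (forall x : R, is_derive x 1 dg (ddg x)) -> 0 < L ->
  (forall x, q - 3 * L <= x <= q -> 0 <= ddg x) ->
  (forall x, q - 2 * L <= x <= q - L -> M <= ddg x) ->
  g q <= g (q - L) -> 0 <= g (q - 2 * L) ->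
  M * L ^+ 2 <= g (q - 3 * L).
Proof.
move=> g_dg dg_ddg L0 ddg_ge0 ddg_geM gq g2.
have := @growth_right_of_min _ (g \o -%R) (fun x => - dg (- x)) (fun x => ddg (- x))
  _ _ (- q) L M L0.
rewrite /= !opprD !opprK; apply => //.
- by move=> x; exact: is_derive_comp_opp.
- move=> x; apply: is_derive_eq (is_deriveN (is_derive_comp_opp (dg_ddg (- x)))) _.
  exact: opprK.
- by move=> x /andP[? ?]; apply: ddg_ge0; apply/andP; split; lra.
- by move=> x /andP[? ?]; apply: ddg_geM; apply/andP; split; lra.
Qed.

Lemma growth_from_argmin (R : realType) (g dg ddg : R -> R) (A alpha a b : R) :
  (forall x : R, is_derive x 1 g (dg x)) -> (forall x : R, is_derive x 1 dg (ddg x)) ->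
  0 <= A -> 0 <= alpha -> a <= b -> (forall x, 0 <= g x) ->
  (forall x, a <= x <= b -> A * Num.min (x - a) (b - x) `^ alpha <= ddg x) ->
  exists2 s0, a <= s0 <= b & forall s, a <= s <= b ->
    A * (`|s - s0| / 3) `^ (alpha + 2) <= g s.
Proof.
move=> g_dg dg_ddg A0 alpha0 ab g0 weight.
have cg : {within `[a, b], continuous g}.
  by apply: derivable_within_continuous => x _; exact: ex_derive.
have [s0 s0ab s0_min] := EVT_min ab cg.
move: s0ab; rewrite in_itv /= => /andP[as0 s0b]; exists s0; first by rewrite as0.
have g_min s : a <= s <= b -> g s0 <= g s.
  by move=> /andP[? ?]; apply: s0_min; rewrite in_itv /=; apply/andP.
have ddg_ge0 x : a <= x <= b -> 0 <= ddg x.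
  by move=> xab; apply: le_trans (weight x xab); rewrite mulr_ge0 ?powR_ge0.
have ddg_mid p L x : 0 < L -> a <= p -> p + 3 * L <= b ->
    p + L <= x <= p + 2 * L -> A * L `^ alpha <= ddg x.
  move=> L0 ap pb /andP[xl xr].
  have Lmin : L <= Num.min (x - a) (b - x) by rewrite le_min; apply/andP; split; lra.
  have xab : a <= x <= b by apply/andP; split; lra.
  apply: le_trans (weight x xab); rewrite ler_wpM2l //.
  by apply: ge0_ler_powR; rewrite // nnegrE; [exact: ltW | exact: le_trans (ltW L0) Lmin].
have powRD2 L : 0 < L -> A * L `^ alpha * L ^+ 2 = A * L `^ (alpha + 2).
  move=> L0; rewrite powRD; last by rewrite (gt_eqF L0) implybT.
  by rewrite powR_mulrn ?mulrA // ltW.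
move=> s /andP[sa sb]; have [s0s|ss0|->] := ltgtP s0 s.
- pose L := (s - s0) / 3; have L0 : 0 < L by rewrite divr_gt0 // subr_gt0.
  have sE : s = s0 + 3 * L by rewrite /L mulrC divfK //; ring.
  have -> : `|s - s0| / 3 = L by rewrite gtr0_norm ?subr_gt0.
  rewrite -powRD2 // sE; apply: (growth_right_of_min g_dg dg_ddg L0) => //.
  + by move=> x /andP[? ?]; apply: ddg_ge0; apply/andP; split; lra.
  + by move=> x; apply: ddg_mid; lra.
  + by apply: g_min; apply/andP; split; lra.
- pose L := (s0 - s) / 3; have L0 : 0 < L by rewrite divr_gt0 // subr_gt0.
  have sE : s = s0 - 3 * L by rewrite /L mulrC divfK //; ring.
  have -> : `|s - s0| / 3 = L by rewrite distrC gtr0_norm ?subr_gt0.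
  rewrite -powRD2 // sE; apply: (growth_left_of_min g_dg dg_ddg L0) => //.
  + by move=> x /andP[? ?]; apply: ddg_ge0; apply/andP; split; lra.
  + by move=> x /andP[? ?]; apply: (ddg_mid (s0 - 3 * L)); lra.
  + by apply: g_min; apply/andP; split; lra.
- rewrite subrr normr0 mul0r powR0 ?mulr0 // gt_eqF //; lra.
Qed.

Lemma sqr_growth_from_argmin (R : realType) (f f1 f2 : R -> R) (A alpha a b : R) :
  (forall x : R, is_derive x 1 f (f1 x)) -> (forall x : R, is_derive x 1 f1 (f2 x)) ->
  0 <= A -> 0 <= alpha -> a <= b ->
  (forall x, a <= x <= b -> A * Num.min (x - a) (b - x) `^ alpha <= f x * f2 x) ->
  exists2 s0, a <= s0 <= b & forall s, a <= s <= b ->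
    2 * A * (`|s - s0| / 3) `^ (alpha + 2) <= f s ^+ 2.
Proof.
move=> f_f1 f1_f2 A0 alpha0 ab weight.
pose dh x := 2 * (f x * f1 x).
have h_dh (x : R) : is_derive x 1 (fun y => f y ^+ 2) (dh x).
  by apply: is_derive_eq (is_deriveX 2 (f_f1 x)) _; rewrite /dh /GRing.scale /=; ring.
have dh_ddh (x : R) : is_derive x 1 dh (2 * (f1 x ^+ 2 + f x * f2 x)).
  apply: is_derive_eq (is_deriveZ 2 (is_deriveM (f_f1 x) (f1_f2 x))) _.
  by rewrite /GRing.scale /=; ring.
apply: (growth_from_argmin h_dh dh_ddh) => //.
- by rewrite mulr_ge0.
- by move=> x; exact: sqr_ge0.
- by move=> x xab; have := weight x xab; have := sqr_ge0 (f1 x); nra.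
Qed.

Lemma powRN_le_of_sqr_ge (R : realType) (c y p gamma E : R) :
  0 < c -> 0 < y -> 0 < gamma -> 0 <= E -> c * y `^ p <= E ^+ 2 ->
  E `^ (- gamma^-1) <= c `^ (- (2 * gamma)^-1) * y `^ (- (p / (2 * gamma))).
Proof.
move=> c0 y0 gamma0 E0 cyE; set r := (2 * gamma)^-1.
have r0 : 0 <= r by rewrite invr_ge0 mulr_ge0 // ltW.
have cy0 : 0 < c * y `^ p by rewrite mulr_gt0 // powR_gt0.
have -> : E `^ (- gamma^-1) = (E ^+ 2) `^ (- r).
  rewrite -powR_mulrn // -powRrM; congr (_ `^ _).
  by rewrite /r invfM mulrN mulrA divff ?mul1r // pnatr_eq0.
have -> : c `^ (- r) * y `^ (- (p / (2 * gamma))) = (c * y `^ p) `^ (- r).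
  by rewrite powRM ?powR_ge0 ?(ltW c0) // -powRrM mulrN.
rewrite !powRN lef_pV2 ?posrE ?powR_gt0 //; last exact: lt_le_trans cyE.
by apply: ge0_ler_powR; rewrite // nnegrE ltW // (lt_le_trans cy0 cyE).
Qed.

Lemma ge0_integral_le_bigcup d (T : measurableType d) (R : realType)
    (mu : measure T R) (D : set T) (F : (set T)^nat) (f : T -> \bar R) (B : \bar R) :
  measurable D -> (forall n, measurable (F n)) -> nondecreasing_seq F ->
  D `<=` \bigcup_n F n -> measurable_fun setT f -> (forall x, (0 <= f x)%E) ->
  (forall n, (\int[mu]_(x in F n) f x <= B)%E) -> (\int[mu]_(x in D) f x <= B)%E.
Proof.
move=> mD mF ndF DF mf f0 FB.
have mU : measurable (\bigcup_n F n) by exact: bigcupT_measurable.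
apply: (@le_trans _ _ (\int[mu]_(x in \bigcup_n F n) f x)%E).
  by apply: ge0_subset_integral => //; exact: measurable_funS mf.
have cvgF := ge0_nondecreasing_set_cvg_integral (mu := mu) ndF mF
  (fun n => measurable_funS measurableT (@subsetT _ _) mf) (fun n x _ => f0 x).
rewrite -(cvg_lim _ cvgF) //; apply: lime_le; first exact: cvgP cvgF.
exact: nearW.
Qed.

Lemma integral_itv_oo_le_of_cc (R : realType) (g : R -> R) (c d B : R) :
  0 <= B -> measurable_fun setT g -> (forall x, 0 <= g x) ->
  (forall u v, c < u -> u < v -> v < d ->
    (\int[lebesgue_measure]_(x in `[u, v]) (g x)%:E <= B%:E)%E) ->
  (\int[lebesgue_measure]_(x in `]c, d[) (g x)%:E <= B%:E)%E.
Proof.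
move=> B0 mg g0 gB; have [cd|dc] := ltP c d; last first.
  by rewrite set_itv_ge ?integral_set0 ?lee_fin // bnd_simp -leNgt.
pose e n := (d - c) / n.+3%:R.
have e_gt0 n : 0 < e n by rewrite divr_gt0 ?subr_gt0.
have e_small n : 3 * e n <= d - c.
  rewrite /e mulrA ler_pdivrMr ?ltr0n // mulrC ler_pM2l ?subr_gt0 //.
  by rewrite (ler_nat R 3).
apply: (@ge0_integral_le_bigcup _ _ R lebesgue_measure _
  (fun n => `[c + e n, d - e n]%classic)).
- exact: measurable_itv.
- by move=> n; exact: measurable_itv.
- move=> n m nm; rewrite subsetEset => x /=; rewrite !in_itv /= => /andP[? ?].
  have : e m <= e n.
    by rewrite ler_pM2l ?subr_gt0 // lef_pV2 ?posrE ?ltr0n // ler_nat !ltnS.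
  by move=> ?; apply/andP; split; lra.
- move=> x /=; rewrite in_itv /= => /andP[cx xd].
  pose delta := Num.min (x - c) (d - x).
  have delta0 : 0 < delta by rewrite lt_min !subr_gt0 cx xd.
  have dc0 : 0 <= d - c by rewrite subr_ge0 ltW.
  have := archi_boundP (divr_ge0 dc0 (ltW delta0)).
  set n := Num.bound _ => nbound; exists n => //=.
  have : e n < delta.
    rewrite /e ltr_pdivrMr ?ltr0n // mulrC -ltr_pdivrMr //.
    by apply: lt_le_trans nbound _; rewrite ler_nat -addn3 leq_addr.
  have : delta <= x - c /\ delta <= d - x by rewrite /delta !ge_min !lexx orbT.
  by move=> [? ?] ?; rewrite in_itv /=; apply/andP; split; lra.
- exact/measurable_EFinP.
- by move=> x; rewrite lee_fin.
- by move=> n; apply: gB; have := e_gt0 n; have := e_small n; lra.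
Qed.

Lemma is_derive_powR_subr (R : realType) (q c x : R) : c < x ->
  is_derive x 1 (fun y => (y - c) `^ q) (q * (x - c) `^ (q - 1)).
Proof.
move=> cx; have xc0 : 0 < x - c by rewrite subr_gt0.
have dsub : is_derive x 1 (fun y : R => y - c) 1.
  by have := is_deriveB (is_derive_id x 1) (is_derive_cst c x 1); rewrite subr0.
have := is_derive1_comp (f := @powR R ^~ q) (g := fun y => y - c) (is_derive1_powR q xc0) dsub.
by rewrite mulr1.
Qed.

Lemma within_continuous_powR_subr (R : realType) (q c u v : R) : c < u ->
  {within `[u, v], continuous (fun x => (x - c) `^ q)}.
Proof.
move=> cu; apply: derivable_within_continuous => x; rewrite in_itv /= => /andP[ux _].
by apply: ex_derive; apply: is_derive_powR_subr; exact: lt_le_trans ux.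
Qed.

Lemma integral_powR_subr_le (R : realType) (beta c u v : R) :
  beta < 1 -> c < u -> u < v ->
  (\int[lebesgue_measure]_(x in `[u, v]) ((x - c) `^ (- beta))%:E
     <= ((v - c) `^ (1 - beta) / (1 - beta))%:E)%E.
Proof.
move=> beta1 cu uv; have beta1' : 0 < 1 - beta by rewrite subr_gt0.
pose F x := (1 - beta)^-1 * (x - c) `^ (1 - beta).
have dF x : c < x -> is_derive x 1 F ((x - c) `^ (- beta)).
  move=> cx; have := is_deriveZ (1 - beta)^-1 (is_derive_powR_subr (1 - beta) cx).
  rewrite /GRing.scale /= mulrA mulVf ?gt_eqF // mul1r.
  by have -> : 1 - beta - 1 = - beta by ring.
have dF_ex x : c < x -> derivable F x 1 by move=> cx; apply: ex_derive; exact: dF.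
have cF x : c < x -> {for x, continuous F}.
  by move=> cx; apply: differentiable_continuous; apply/derivable1_diffP; exact: dF_ex.
rewrite (@continuous_FTC2 _ (fun x => (x - c) `^ (- beta)) F u v uv).
- have : 0 <= F u by rewrite mulr_ge0 ?invr_ge0 ?powR_ge0 // ltW.
  by rewrite -EFinD lee_fin /F mulrC; lra.
- exact: within_continuous_powR_subr.
- split.
  + by move=> x; rewrite in_itv /= => /andP[ux _]; apply: dF_ex; exact: lt_trans ux.
  + exact/cvg_at_right_filter/cF.
  + by apply/cvg_at_left_filter/cF; exact: lt_trans uv.
- move=> x; rewrite in_itv /= => /andP[ux _].
  by rewrite derive1E; apply: derive_val; apply: dF; exact: lt_trans ux.
Qed.

Lemma integral_powR_rsub_le (R : realType) (beta c u v : R) :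
  beta < 1 -> u < v -> v < c ->
  (\int[lebesgue_measure]_(x in `[u, v]) ((c - x) `^ (- beta))%:E
     <= ((c - u) `^ (1 - beta) / (1 - beta))%:E)%E.
Proof.
move=> beta1 uv vc; pose G y := (y - - c) `^ (- beta).
have -> : (\int[lebesgue_measure]_(x in `[u, v]) ((c - x) `^ (- beta))%:E
    = \int[lebesgue_measure]_(x in `[u, v]) ((G \o -%R) x)%:E)%E.
  by apply: eq_integral => x _; rewrite /G /= opprK addrC.
rewrite -integration_by_substitution_oppr ?(ltW uv) //; last first.
  by apply: within_continuous_powR_subr; rewrite ltrN2.
have -> : c - u = - u - - c by rewrite opprK addrC.
by apply: integral_powR_subr_le; rewrite ?ltrN2.
Qed.

Lemma integral_dist_powR_le (R : realType) (beta a b c : R) :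
  beta < 1 -> a <= c <= b ->
  (\int[lebesgue_measure]_(x in `[a, b]) (`|x - c| `^ (- beta))%:E
     <= (2 * (b - a) `^ (1 - beta) / (1 - beta))%:E)%E.
Proof.
move=> beta1 /andP[ac cb].
set B := (b - a) `^ (1 - beta) / (1 - beta).
have B_ge y : 0 <= y <= b - a -> y `^ (1 - beta) / (1 - beta) <= B.
  move=> /andP[y0 yba]; rewrite ler_pM2r ?invr_gt0 ?subr_gt0 //.
  by apply: ge0_ler_powR; rewrite ?nnegrE; lra.
have B0 : 0 <= B by rewrite divr_ge0 ?powR_ge0 // subr_ge0 ltW.
have mg : measurable_fun setT (fun x : R => `|x - c| `^ (- beta)).
  apply: (measurableT_comp (measurable_powR _)).
  apply: measurableT_comp; [exact: normr_measurable | exact: measurable_funB].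
have mgE : measurable_fun setT (fun x : R => (`|x - c| `^ (- beta))%:E).
  exact/measurable_EFinP.
have -> : `[a, b]%classic = `[a, c[ `|` `[c, b].
  by apply: itv_bndbnd_setU; rewrite bnd_simp.
rewrite ge0_integral_setU //=; last 2 first.
- exact: measurable_funS mgE.
- by apply/disj_setPS => x [/=]; rewrite !in_itv /= => /andP[_ ?] /andP[? _]; lra.
have -> : 2 * (b - a) `^ (1 - beta) / (1 - beta) = B + B by rewrite /B; ring.
rewrite EFinD; apply: leeD; rewrite integral_itv_bndoo; try exact: measurable_funS mgE.
- apply: integral_itv_oo_le_of_cc => // u v au uv vc.
  rewrite (@eq_integral _ (measurableTypeR R) R _ `[u, v]%classic
    (fun x : R => ((c - x) `^ (- beta))%:E)); last first.
    move=> x; rewrite inE /= in_itv /= => /andP[_ xv].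
    by rewrite distrC ger0_norm // subr_ge0 (le_trans xv) // ltW.
  apply: le_trans (integral_powR_rsub_le beta1 uv vc) _.
  by rewrite lee_fin B_ge //; apply/andP; split; lra.
- apply: integral_itv_oo_le_of_cc => // u v cu uv vb.
  rewrite (@eq_integral _ (measurableTypeR R) R _ `[u, v]%classic
    (fun x : R => ((x - c) `^ (- beta))%:E)); last first.
    move=> x; rewrite inE /= in_itv /= => /andP[ux _].
    by rewrite ger0_norm // subr_ge0 ltW // (lt_le_trans cu).
  apply: le_trans (integral_powR_subr_le beta1 cu uv) _.
  by rewrite lee_fin B_ge //; apply/andP; split; lra.
Qed.

Lemma integral_dominated_dist_powR_le (R : realType) (g : R -> R) (k beta a b c : R) :
  0 <= k -> beta < 1 -> a <= c <= b ->
  measurable_fun setT g -> (forall x, 0 <= g x) ->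
  (forall x, a <= x <= b -> x != c -> g x <= k * `|x - c| `^ (- beta)) ->
  (\int[lebesgue_measure]_(x in `[a, b]) (g x)%:E
     <= (k * (2 * (b - a) `^ (1 - beta) / (1 - beta)))%:E)%E.
Proof.
move=> k0 beta1 acb mg g0 g_le.
have mD : measurable (`[a, b]%classic `\ c).
  by apply: measurableD; [exact: measurable_itv | exact: measurable_set1].
have mgE : measurable_fun setT (fun x => (g x)%:E) by exact/measurable_EFinP.
have mh : measurable_fun setT (fun x : R => (`|x - c| `^ (- beta))%:E).
  apply/measurable_EFinP; apply: (measurableT_comp (measurable_powR _)).
  by apply: measurableT_comp; [exact: normr_measurable | exact: measurable_funB].
rewrite -(integral_setD1 (r := c) mD); last exact: measurable_funS mgE.
apply: (@le_trans _ _ (\int[lebesgue_measure]_(x in `[a, b]%classic `\ c)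
    (k%:E * (`|x - c| `^ (- beta))%:E))%E).
  apply: ge0_le_integral => //.
  - by move=> x _; rewrite lee_fin.
  - exact: measurable_funS mgE.
  - apply: emeasurable_funM; [exact: measurable_cst | exact: measurable_funS mh].
  - by move=> x [xab /eqP xc]; rewrite -EFinM lee_fin; apply: g_le.
rewrite ge0_integralZl_EFin //; last exact: measurable_funS mh.
rewrite integral_setD1 //; last exact: measurable_funS mh.
by rewrite EFinM lee_wpmul2l ?lee_fin // integral_dist_powR_le.
Qed.

Lemma integral_norm_powRN_le (R : realType) (f f1 f2 : R -> R) (A alpha gamma beta a b : R) :
  (forall x : R, is_derive x 1 f (f1 x)) -> (forall x : R, is_derive x 1 f1 (f2 x)) ->
  0 < A -> 0 <= alpha -> 0 < gamma -> beta = (alpha + 2) / (2 * gamma) -> beta < 1 ->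
  a <= b -> (forall x, a <= x <= b -> A * Num.min (x - a) (b - x) `^ alpha <= f x * f2 x) ->
  (\int[lebesgue_measure]_(x in `[a, b]) (`|f x| `^ (- gamma^-1))%:E
     <= ((2 * A) `^ (- (2 * gamma)^-1) * 3^-1 `^ (- beta)
         * (2 * (b - a) `^ (1 - beta) / (1 - beta)))%:E)%E.
Proof.
move=> f_f1 f1_f2 A0 alpha0 gamma0 betaE beta1 ab weight.
have [s0 /andP[as0 s0b] growth] := sqr_growth_from_argmin f_f1 f1_f2 (ltW A0) alpha0 ab weight.
have cf : continuous f.
  by move=> x; apply: differentiable_continuous; apply/derivable1_diffP; exact: ex_derive.
apply: (integral_dominated_dist_powR_le (c := s0)) => //.
- by rewrite mulr_ge0 ?powR_ge0.
- by rewrite as0.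
- apply: (measurableT_comp (measurable_powR _)).
  by apply: measurableT_comp; [exact: normr_measurable | exact: continuous_measurable_fun].
- move=> x xab xs0; have xs0' : 0 < `|x - s0| / 3 by rewrite divr_gt0 ?normr_gt0 ?subr_eq0.
  have := powRN_le_of_sqr_ge (p := alpha + 2) (mulr_gt0 (ltr0Sn _ 1) A0) xs0' gamma0
    (normr_ge0 (f x)).
  rewrite real_normK ?num_real // -betaE => /(_ (growth x xab)) /le_trans; apply.
  by rewrite [(`|x - s0| / 3) `^ _]powRM ?invr_ge0 //; lra.
Qed.

Theorem lemma3p6 (R : realType) (theta1 theta2 gamma A alpha : R) :
  theta1 < theta2 -> 1 < gamma -> 0 < A -> 0 < alpha ->
  alpha < 2 * gamma - 2 ->
  exists C : R, 0 < C /\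
    forall (f : R -> R) (a b : R),
      C2 f -> theta1 <= a -> a <= b -> b <= theta2 ->
      ((forall s, a <= s <= b ->
          A * (s - theta1) `^ alpha <= f s * derive1 (derive1 f) s) \/
       (forall s, a <= s <= b ->
          A * (theta2 - s) `^ alpha <= f s * derive1 (derive1 f) s)) ->
      (\int[(@lebesgue_measure R)]_(s in `[a, b])
          ((`|f s| `^ (- gamma^-1))%:E) <= C%:E)%E.
Proof.
move=> t12 gamma1 A0 alpha0 alpha_lt; have gamma0 : 0 < gamma by lra.
set beta := (alpha + 2) / (2 * gamma).
have beta1 : beta < 1 by rewrite ltr_pdivrMr ?mulr_gt0 // mul1r; lra.
set k := (2 * A) `^ (- (2 * gamma)^-1) * 3^-1 `^ (- beta).
have k0 : 0 < k by rewrite mulr_gt0 ?powR_gt0 ?mulr_gt0.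
have beta1' : 0 < 1 - beta by rewrite subr_gt0.
exists (k * (2 * (theta2 - theta1) `^ (1 - beta) / (1 - beta))); split.
  by rewrite mulr_gt0 // divr_gt0 // mulr_gt0 // powR_gt0 // subr_gt0.
move=> f a b [df [ddf _]] t1a ab bt2 weight.
apply: le_trans (integral_norm_powRN_le (f1 := derive1 f) (f2 := derive1 (derive1 f))
  _ _ A0 (ltW alpha0) gamma0 (erefl beta) beta1 ab _) _.
- by move=> x; rewrite derive1E; exact: derivableP.
- by move=> x; rewrite derive1E; exact: derivableP.
- move=> x /[dup] xab /andP[ax xb].
  have [min_l min_r] : Num.min (x - a) (b - x) <= x - a /\ Num.min (x - a) (b - x) <= b - x.
    by rewrite !ge_min !lexx orbT.
  have min0 : 0 <= Num.min (x - a) (b - x) by rewrite le_min !subr_ge0 ax xb.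
  case: weight => w; apply: le_trans (w x xab); rewrite ler_pM2l //;
    by apply: ge0_ler_powR; rewrite ?nnegrE; lra.
rewrite lee_fin ler_pM2l // ler_pM2r ?invr_gt0 // ler_pM2l //.
by apply: ge0_ler_powR; rewrite ?nnegrE; lra.
Qed.
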